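(* Let $p\ge2$ be an integer. Let $f$ be either the binary loop $C_p$ (with $n=2$) or the $n$-ary iterated group $f(x_1,\dots,x_n)=x_1+\dots+x_n$ of $\mathbb{Z}_p\times\mathbb{Z}_2$ ($n\ge2$), and for $i=1,\dots,n$ let $h_i$ be the $m_i$-ary iterated group of $D_p$, $h_i(z_1,\dots,z_{m_i})=z_1\circ\cdots\circ z_{m_i}$ ($m_i\ge1$). Then the MDS code $M=\{(x,\overline z_1,\dots,\overline z_n): x=f(h_1(\overline z_1),\dots,h_n(\overline z_n))\}\subseteq Q_{2p}^{1+m_1+\dots+m_n}$ is isotopically transitive.
   Context: Let $Q_{2p}=\{x_\zeta : x\in\mathbb{Z}_p,\ \zeta\in\{0,1\}\}$, with $0_0$ playing the role of $0$. Arithmetic on the main symbol is mod $p$, on subscripts mod $2$ ($\oplus$). The group $\mathbb{Z}_p\times\mathbb{Z}_2$: $x_\zeta+y_\xi=(x+y)_{\zeta\oplus\xi}$. The dihedral group $D_p$: $x_\zeta\circ y_\xi=((-1)^\xi x+y)_{\zeta\oplus\xi}$. The loop $C_p$: $x_\zeta\ast y_\xi=((-1)^\xi x+y+\zeta\xi)_{\zeta\oplus\xi}$. An isotopism of $Q_{2p}^N$ is a map $\overline{x}\mapsto(\tau_1x_1,\dots,\tau_Nx_N)$ with $\tau_i$ permutations of $Q_{2p}$; a set is isotopically transitive if the group of isotopisms mapping it onto itself acts transitively on it. *)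

From HB Require Import structures.
From mathcomp Require Import all_boot all_order all_algebra all_fingroup.
Set Implicit Arguments. Unset Strict Implicit. Unset Printing Implicit Defensive.
Import GRing.Theory.
Local Open Scope ring_scope.

(* Q_{2p} = Z_p x Z_2 : element x_zeta is (x, zeta) with zeta : bool.
   0_0 is (0, false). Requires 2 <= p for 'Z_p to be Z/pZ. *)
Definition Q (p : nat) : finType := ('Z_p * bool)%type.

Definition Qzero (p : nat) : Q p := (0, false).

Definition plusQ (p : nat) (a b : Q p) : Q p := (a.1 + b.1, a.2 (+) b.2).

Definition sgn (p : nat) (xi : bool) (x : 'Z_p) : 'Z_p := if xi then - x else x.

Definition dihQ (p : nat) (a b : Q p) : Q p := (sgn b.2 a.1 + b.1, a.2 (+) b.2).

Definition loopQ (p : nat) (a b : Q p) : Q p :=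
  (sgn b.2 a.1 + b.1 + (a.2 && b.2)%:R, a.2 (+) b.2).

Definition hD (p : nat) (s : seq (Q p)) : Q p := foldl (@dihQ p) (Qzero p) s.

Definition fsum (p n : nat) (y : 'I_n -> Q p) : Q p :=
  foldl (@plusQ p) (Qzero p) [seq y i | i <- enum 'I_n].

(* binary loop C_p applied to (y_1, y_2) (used with n = 2) *)
Definition floop (p n : nat) (y : 'I_n -> Q p) : Q p :=
  let s := [seq y i | i <- enum 'I_n] in
  loopQ (nth (Qzero p) s 0) (nth (Qzero p) s 1).

(* coordinates: None is the coordinate x; Some (i; j) is the j-th entry of z_i *)
Definition coord (n : nat) (m : 'I_n -> nat) : finType :=
  option {i : 'I_n & 'I_(m i)}.

Definition zcoord (n : nat) (m : 'I_n -> nat) (i : 'I_n) (j : 'I_(m i)) : coord m :=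
  Some (Tagged (fun k => 'I_(m k)) j).

Definition codeM (p n : nat) (m : 'I_n -> nat) (f : ('I_n -> Q p) -> Q p)
  : {set {ffun coord m -> Q p}} :=
  [set w : {ffun coord m -> Q p} |
     w None == f (fun i => hD [seq w (zcoord j) | j <- enum 'I_(m i)])].

Definition isotopism (p : nat) (T : finType) (tau : T -> {perm Q p})
  (w : {ffun T -> Q p}) : {ffun T -> Q p} := [ffun c => tau c (w c)].

Definition isotopically_transitive (p : nat) (T : finType)
  (A : {set {ffun T -> Q p}}) : Prop :=
  forall u v, u \in A -> v \in A ->
    exists tau : T -> {perm Q p},
      [set isotopism tau w | w in A] = A /\ isotopism tau u = v.

From Pilot Require Import Defs.
From mathcomp Require Import all_boot all_order all_algebra all_fingroup.
From mathcomp Require Import ring.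
Set Implicit Arguments. Unset Strict Implicit. Unset Printing Implicit Defensive.
Import GRing.Theory.
Local Open Scope ring_scope.

(* Write x_zeta o y_xi for the dihedral product.  The maps
   nu_{e,k} : y_zeta |-> ((-1)^e y + zeta k)_zeta are automorphisms of D_p.
   Given a codeword u with blocks u_i = (u_i1, ..., u_im_i) and prefix products
   a_0 = 0_0, a_j = u_i1 o ... o u_ij, the coordinate permutations
   z |-> a_{j-1}^-1 o nu(z) o a_j telescope: h_i of the permuted block is
   nu(h_i(z_i)) o h_i(u_i), and they send 0_0 to u_ij.  If f is "translatable",
   i.e. for every b there is a permutation G with
   G (f y) = f (nu_i(y_i) o b_i), then choosing b_i = h_i(u_i) and G on the
   first coordinate gives an autotopism of M sending the base word
   (f(0,...,0), 0, ..., 0) to u.  Composing such an autotopism with the inverse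
   of another one gives isotopic transitivity. *)

Section Dihedral.
Variable p : nat.
Local Notation Q := (Q p).
Local Notation "a \oD b" := (@dihQ p a b) (at level 40, left associativity).
Local Notation O := (Qzero p).

Lemma sgnK e (x : 'Z_p) : sgn e (sgn e x) = x.
Proof. by case: e => //=; rewrite opprK. Qed.

Lemma dihA (a b c : Q) : a \oD b \oD c = a \oD (b \oD c).
Proof.
case: a => a1 a2; case: b => b1 b2; case: c => c1 c2.
rewrite /dihQ /=; congr pair; last by rewrite addbA.
by case: a2; case: b2; case: c2; rewrite /sgn /=; ring.
Qed.

Lemma dih0q (a : Q) : O \oD a = a.
Proof. by case: a => a1 [|]; rewrite /dihQ /sgn /= ?oppr0 add0r. Qed.

Lemma dihq0 (a : Q) : a \oD O = a.
Proof. by case: a => a1 a2; rewrite /dihQ /= addr0 addbF. Qed.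

Definition dinv (a : Q) : Q := (- sgn a.2 a.1, a.2).

Lemma dihVq (a : Q) : dinv a \oD a = O.
Proof. by case: a => a1 [|]; rewrite /dihQ /dinv /Qzero /sgn /=; congr pair; ring. Qed.

Lemma dihqV (a : Q) : a \oD dinv a = O.
Proof. by case: a => a1 [|]; rewrite /dihQ /dinv /Qzero /sgn /=; congr pair; ring. Qed.

Lemma dinv0 : dinv O = O.
Proof. by rewrite /dinv /Qzero /= oppr0. Qed.

Lemma dihKV (a b : Q) : dinv a \oD (a \oD b) = b.
Proof. by rewrite -dihA dihVq dih0q. Qed.

Lemma dihVK (a b : Q) : a \oD (dinv a \oD b) = b.
Proof. by rewrite -dihA dihqV dih0q. Qed.

Lemma dihqK (a b : Q) : a \oD b \oD dinv b = a.
Proof. by rewrite dihA dihqV dihq0. Qed.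

Definition nu (e : bool) (k : 'Z_p) (y : Q) : Q := (sgn e y.1 + y.2%:R * k, y.2).

Lemma nuM e k (a b : Q) : nu e k (a \oD b) = nu e k a \oD nu e k b.
Proof.
case: a => a1 a2; case: b => b1 b2; rewrite /nu /dihQ /=; congr pair.
by case: a2; case: b2; case: e; rewrite /sgn /=; ring.
Qed.

Lemma nu0 e k : nu e k O = O.
Proof. by case: e; rewrite /nu /Qzero /sgn /= ?oppr0 mul0r addr0. Qed.

Lemma nu_inj e k : injective (nu e k).
Proof.
case=> a1 a2 [b1 b2] eq_nu; have /= eq2 : a2 = b2 := congr1 snd eq_nu.
have /= := congr1 fst eq_nu; rewrite -eq2 => /GRing.addIr /(congr1 (sgn e)).
by rewrite !sgnK => ->.
Qed.

Lemma foldl_dih c s : foldl (@dihQ p) c s = c \oD hD s.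
Proof.
elim: s c => [|x s IHs] c /=; first by rewrite dihq0.
by rewrite /hD /= !IHs dih0q dihA.
Qed.

Lemma hD_cons x s : hD (x :: s) = x \oD hD s.
Proof. by rewrite {1}/hD /= foldl_dih dih0q. Qed.

Lemma hD_rcons s x : hD (rcons s x) = hD s \oD x.
Proof. by rewrite /hD foldl_rcons. Qed.

Definition relay (A : nat -> Q) e k j (x : Q) : Q := dinv (A j) \oD nu e k x \oD A j.+1.

Lemma relay_inj A e k j : injective (relay A e k j).
Proof.
move=> x y /(congr1 (fun z => A j \oD (z \oD dinv (A j.+1)))).
by rewrite !dihqK !dihVK => /nu_inj.
Qed.

(* Consecutive relays telescope: only the outer anchors survive. *)
Lemma relay_telescope M A e k (F : 'I_M -> Q) (l : seq 'I_M) j0 c :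
  map val l = iota j0 (size l) ->
  foldl (@dihQ p) c [seq relay A e k (val j) (F j) | j <- l] =
  c \oD dinv (A j0) \oD nu e k (hD [seq F j | j <- l]) \oD A (j0 + size l)%N.
Proof.
elim: l j0 c => [|j l IHl] j0 c /=.
  by move=> _; rewrite nu0 addn0 dihq0 dihA dihVq dihq0.
case=> <- val_l; rewrite (IHl j.+1) // hD_cons nuM /relay -addSnnS.
by rewrite !dihA dihVK.
Qed.

Lemma relay_block M A e k (F : 'I_M -> Q) : A 0%N = O ->
  hD [seq relay A e k (val j) (F j) | j <- enum 'I_M] =
  nu e k (hD [seq F j | j <- enum 'I_M]) \oD A M.
Proof.
move=> A0; rewrite {1}/hD (@relay_telescope M A e k F _ 0).
  by rewrite A0 dinv0 !dih0q size_enum_ord.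
by rewrite val_enum_ord size_enum_ord.
Qed.

Definition prefix_prod (s : seq Q) j : Q := hD (take j s).

Lemma relay_prefix0 s j e k : (j < size s)%N -> relay (prefix_prod s) e k j O = nth O s j.
Proof.
move=> lt_j_s; rewrite /relay nu0 dihq0 /prefix_prod (take_nth O) //.
by rewrite hD_rcons dihKV.
Qed.

End Dihedral.

Section TransitivityCriterion.
Variables (p : nat) (T : finType) (A : {set {ffun T -> Q p}}).

(* An autotopism: an isotopism mapping A into (hence onto) itself. *)
Definition autotopic (tau : T -> {perm Q p}) : Prop :=
  forall w, w \in A -> isotopism tau w \in A.

Lemma isotopism_inj (tau : T -> {perm Q p}) : injective (isotopism tau).
Proof.
move=> w w' eq_ww'; apply/ffunP => c.
by have := congr1 (fun z : {ffun T -> Q p} => z c) eq_ww'; rewrite !ffunE => /perm_inj.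
Qed.

Lemma isotopism_comp (s t : T -> {perm Q p}) w :
  isotopism (fun c => (s c * t c)%g) w = isotopism t (isotopism s w).
Proof. by apply/ffunP => c; rewrite !ffunE permM. Qed.

Lemma isotopismK (tau : T -> {perm Q p}) w : isotopism (fun c => ((tau c)^-1)%g) (isotopism tau w) = w.
Proof. by apply/ffunP => c; rewrite !ffunE permK. Qed.

Lemma autotopic_onto (tau : T -> {perm Q p}) : autotopic tau -> [set isotopism tau w | w in A] = A.
Proof.
move=> tauA; apply/eqP; rewrite eqEcard card_imset ?leqnn ?andbT //.
  by apply/subsetP => _ /imsetP [w wA ->]; exact: tauA.
exact: isotopism_inj.
Qed.

Lemma autotopicV (tau : T -> {perm Q p}) : autotopic tau -> autotopic (fun c => ((tau c)^-1)%g).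
Proof.
move=> tauA w; rewrite -{1}(autotopic_onto tauA) => /imsetP [w' w'A ->].
by rewrite isotopismK.
Qed.

Lemma autotopicM (s t : T -> {perm Q p}) :
  autotopic s -> autotopic t -> autotopic (fun c => (s c * t c)%g).
Proof. by move=> sA tA w wA; rewrite isotopism_comp; apply/tA/sA. Qed.

Lemma transitive_from_base (w0 : {ffun T -> Q p}) :
  (forall u, u \in A -> exists2 tau, autotopic tau & isotopism tau w0 = u) ->
  isotopically_transitive A.
Proof.
move=> reach u v uA vA.
have [tu tuA tu_u] := reach u uA; have [tv tvA tv_v] := reach v vA.
exists (fun c => ((tu c)^-1 * tv c)%g); split.
  exact/autotopic_onto/autotopicM/tvA/autotopicV.
by rewrite isotopism_comp -tu_u isotopismK.
Qed.

End TransitivityCriterion.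

Definition translatable (p n : nat) (f : ('I_n -> Q p) -> Q p) : Prop :=
  forall b : 'I_n -> Q p, exists e k (G : {perm Q p}),
    forall y, G (f y) = f (fun i => dihQ (nu (e i) (k i) (y i)) (b i)).

(* f only depends on the values of its argument (avoids function extensionality). *)
Definition extensional (p n : nat) (f : ('I_n -> Q p) -> Q p) : Prop :=
  forall y y', y =1 y' -> f y = f y'.

Section CodeAutotopisms.
Variables (p n : nat) (m : 'I_n -> nat) (f : ('I_n -> Q p) -> Q p).
Hypothesis f_ext : extensional f.
Local Notation Q := (Q p).
Local Notation O := (Qzero p).
Local Notation word := {ffun Defs.coord m -> Q}.

Definition block (w : word) (i : 'I_n) : seq Q := [seq w (zcoord j) | j <- enum 'I_(m i)].

Lemma size_block w i : size (block w i) = m i.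
Proof. by rewrite size_map size_enum_ord. Qed.

Lemma in_codeM w : (w \in codeM m f) = (w None == f (fun i => hD (block w i))).
Proof. by rewrite inE. Qed.

Definition base_word : word := [ffun c => if c is None then f (fun _ => O) else O].

Definition reach_iso (u : word) (e : 'I_n -> bool) (k : 'I_n -> 'Z_p) (G : {perm Q})
    (c : Defs.coord m) : {perm Q} :=
  if c is Some x then
    perm (@relay_inj p (prefix_prod (block u (tag x))) (e (tag x)) (k (tag x))
                     (val (tagged x)))
  else G.

Lemma hD_block_reach u e k G w i :
  hD (block (isotopism (reach_iso u e k G) w) i) =
  dihQ (nu (e i) (k i) (hD (block w i))) (hD (block u i)).
Proof.
rewrite [in LHS]/block (eq_map (g := fun j => relay (prefix_prod (block u i)) (e i) (k i)
                                         (val j) (w (zcoord j)))); last first.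
  by move=> j; rewrite ffunE /= permE.
rewrite relay_block /prefix_prod ?take0 //.
by rewrite -[X in take X _](size_block u i) take_size.
Qed.

Lemma reach_iso_spec u e k (G : {perm Q}) :
  u \in codeM m f ->
  (forall y, G (f y) = f (fun i => dihQ (nu (e i) (k i) (y i)) (hD (block u i)))) ->
  autotopic (codeM m f) (reach_iso u e k G) /\ isotopism (reach_iso u e k G) base_word = u.
Proof.
move=> uM Gf; split=> [w|].
  rewrite !in_codeM ffunE /= => /eqP ->; rewrite Gf.
  by apply/eqP/f_ext => i; rewrite hD_block_reach.
apply/ffunP => -[[i j]|]; rewrite !ffunE /=.
  rewrite permE relay_prefix0 ?size_block //.
  by rewrite (nth_map j) ?size_enum_ord // nth_ord_enum.
move: uM; rewrite in_codeM => /eqP ->.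
by rewrite Gf; apply: f_ext => i; rewrite nu0 dih0q.
Qed.

Lemma codeM_transitive : translatable f -> isotopically_transitive (codeM m f).
Proof.
move=> f_tr; apply: (transitive_from_base (w0 := base_word)) => u uM.
have [e [k [G Gf]]] := f_tr (fun i => hD (block u i)).
by have [] := reach_iso_spec uM Gf; exists (reach_iso u e k G).
Qed.

End CodeAutotopisms.

Section IteratedSum.
Variables p n : nat.
Local Notation Q := (Q p).
Local Notation O := (Qzero p).

Lemma plusACA (a b c d : Q) :
  plusQ (plusQ a b) (plusQ c d) = plusQ (plusQ a c) (plusQ b d).
Proof.
rewrite /plusQ /=; congr pair; first by ring.
by case: a.2; case: b.2; case: c.2; case: d.2.
Qed.

Lemma plusI (c : Q) : injective (fun x : Q => plusQ x c).
Proof.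
case: c => c1 c2 [x1 x2] [y1 y2] eq_xy.
have /GRing.addIr -> : x1 + c1 = y1 + c1 := congr1 fst eq_xy.
have : x2 (+) c2 = y2 (+) c2 := congr1 snd eq_xy.
by move/(congr1 (addb^~ c2)); rewrite !addbK => ->.
Qed.

Lemma fsumD (y b : 'I_n -> Q) : fsum (fun i => plusQ (y i) (b i)) = plusQ (fsum y) (fsum b).
Proof.
have plus00 : plusQ O O = O by rewrite /plusQ /= addr0.
suff sumD c d (l : seq 'I_n) :
    foldl (@plusQ p) (plusQ c d) [seq plusQ (y i) (b i) | i <- l] =
    plusQ (foldl (@plusQ p) c (map y l)) (foldl (@plusQ p) d (map b l)).
  by rewrite /fsum -sumD plus00.
by elim: l c d => //= i l IHl c d; rewrite plusACA IHl.
Qed.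

Lemma fsum_ext : extensional (@fsum p n).
Proof. by move=> y y' eq_y; rewrite /fsum (eq_map eq_y). Qed.

(* Translating by b is undone by nu_{b_i.2,0}: y_i o b_i = nu(y_i) + b_i. *)
Lemma fsum_translatable : translatable (@fsum p n).
Proof.
move=> b; exists (fun i => (b i).2), (fun _ => 0), (perm (@plusI (fsum b))) => y.
rewrite permE -fsumD; apply: fsum_ext => i.
by rewrite /nu /dihQ /plusQ /= mulr0 addr0 sgnK.
Qed.

End IteratedSum.

Section Loop.
Variable p : nat.
Local Notation Q := (Q p).
Local Notation "a \oD b" := (@dihQ p a b) (at level 40, left associativity).
Let o0 : 'I_2 := ord0.
Let o1 : 'I_2 := @Ordinal 2 1 isT.

Lemma floop2 (y : 'I_2 -> Q) : floop y = loopQ (y o0) (y o1).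
Proof. by rewrite /floop !enum_ordSl /=; congr loopQ; congr y; apply: val_inj. Qed.

Lemma floop_ext : extensional (@floop p 2).
Proof. by move=> y y' eq_y; rewrite !floop2 !eq_y. Qed.

Lemma loop_twist (b1 b2 y1 y2 : Q) :
  let K := b1.1 *+ 2 - (b1.2 (+) b2.2)%:R in
  loopQ (nu b2.2 0 y1 \oD b1) (nu (b1.2 (+) b2.2) K y2 \oD b2) =
  loopQ b1 (nu (b1.2 (+) b2.2) K (loopQ y1 y2) \oD b2).
Proof.
case: b1 => B1 e1; case: b2 => B2 e2; case: y1 => a al; case: y2 => c ga.
rewrite /loopQ /dihQ /nu /=; congr pair; last by case: e1; case: e2; case: al; case: ga.
by case: e1; case: e2; case: al; case: ga; rewrite /sgn /=; ring.
Qed.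

Lemma loopI (a : Q) : injective (loopQ a).
Proof.
case: a => a1 a2 [x1 x2] [y1 y2] eq_xy.
have eq2 : x2 = y2 by have := congr1 (addb a2) (congr1 snd eq_xy); rewrite !addKb.
by have /= := congr1 fst eq_xy; rewrite -eq2 => /GRing.addIr /GRing.addrI ->.
Qed.

Lemma floop_translatable : translatable (@floop p 2).
Proof.
move=> b; pose e := (b o0).2 (+) (b o1).2; pose K := (b o0).1 *+ 2 - e%:R.
have G_inj : injective (fun x => loopQ (b o0) (nu e K x \oD b o1)).
  move=> x x' /loopI /(congr1 (fun z : Q => z \oD dinv (b o1))).
  by rewrite !dihqK => /nu_inj.
exists (fun i => if i == o0 then (b o1).2 else e).
exists (fun i => if i == o0 then 0 else K).
by exists (perm G_inj) => y; rewrite permE !floop2 /= loop_twist.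
Qed.

End Loop.

Theorem theorem1 (p n : nat) (m : 'I_n -> nat) (f : ('I_n -> Q p) -> Q p) :
  (2 <= p)%N ->
  ((n = 2 /\ f = @floop p n) \/ ((2 <= n)%N /\ f = @fsum p n)) ->
  (forall i, (1 <= m i)%N) ->
  isotopically_transitive (codeM m f).
Proof.
move=> _ [[n2 ->] | [_ ->]] _; last first.
  exact: codeM_transitive (@fsum_ext p n) (@fsum_translatable p n).
subst n; exact: codeM_transitive (@floop_ext p) (@floop_translatable p).
Qed.
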